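(* Let $K(z,u)=(u-1)^2(1-zu^2)-zu^3$ and, for real $x\in(0,1/12)$, let $u_1(x)\in(1,2)$ and $u_2(x)\in(0,1)$ be the unique real roots of $u\mapsto K(x,u)$ in these intervals. Fix $\theta\in(0,2\pi)$ and let $D(\theta)=\{z\in\mathbb C:|z|<4\}\setminus\big(\{re^{\mathrm i\theta}:r\ge0\}\cup[1/12,+\infty)\big)$. Then $u_1$ and $u_2$ have analytic continuations on $D(\theta)$. Moreover, $u_2$ is analytic at $z=1/12$ with $u_2(1/12)=(-3+\sqrt{21})/2$, while for $z$ approaching $1/12$ in $D(\theta)$, \[ u_1(z)=2-\sqrt{12/7}\cdot\sqrt{1-12z}+O(1-12z). \]
   Context: $\sqrt{\cdot}$ denotes the principal branch of the square root. *)

From Stdlib Require Import Reals.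
From Coquelicot Require Import Coquelicot.
Open Scope R_scope.

Definition Kr (x u : R) : R :=
  (u - 1) ^ 2 * (1 - x * u ^ 2) - x * u ^ 3.

(* f is holomorphic (complex differentiable, equivalently analytic)
   at every point of the (open) set U *)
Definition holomorphic_on (U : C -> Prop) (f : C -> C) : Prop :=
  forall z, U z -> @ex_derive C_AbsRing C_NormedModule f z.

Definition Dtheta (theta : R) (z : C) : Prop :=
  Cmod z < 4 /\
  ~ (exists r : R, 0 <= r /\ z = (r * cos theta, r * sin theta)) /\
  ~ (snd z = 0 /\ 1 / 12 <= fst z).

Definition Csqrt (w : C) : C :=
  (sqrt ((Cmod w + fst w) / 2),
   (if Rle_dec 0 (snd w) then 1 else -1) * sqrt ((Cmod w - fst w) / 2)).

(* Writing u = 2 / (1 + q), the equation K(z, u) = 0 becomes a quadratic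
   equation for q^2 with roots 1 + 2 z +- 2 sqrt (z (z + 4)), so u1 and u2 are
   2 / (1 + sqrt (disc_-2 z)) and 2 / (1 + sqrt (disc_2 z)).  On D(theta),
   sqrt (z (z + 4)) has the holomorphic branch sqrt z * sqrt (z + 4), with the
   cut of sqrt z turned onto the ray of angle theta, and the identity
   (1 - p)^2 = 4 z (3 + p) satisfied by p = disc_+-2 z keeps p off the cut
   (-oo, 0] of the outer square root as long as z avoids [1/12, +oo).
   Near z = 1/12, disc_2 z is close to 7/3, so u2 stays analytic there; and
   p = disc_-2 z satisfies (1 - 12 z)(3 + p) = p (7 - 3 p), whence
     2 / (1 + sqrt p) = 2 - 2 sqrt p + O(p)
                      = 2 - sqrt (12/7) sqrt (1 - 12 z) + O(1 - 12 z).
   The last step compares two principal square roots, which lie in the same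
   closed quadrant because Im p and Im (1 - 12 z) have the same sign. *)

From Stdlib Require Import Reals Lra.
From Coquelicot Require Import Coquelicot.
Open Scope R_scope.

Local Notation ex_derive_C f z := (@ex_derive C_AbsRing C_NormedModule f z).
Local Notation is_derive_C f z l := (@is_derive C_AbsRing C_NormedModule f z l).

Lemma fst_le_Cmod (c : C) : fst c <= Cmod c.
Proof. exact (Rle_trans _ _ _ (Rle_abs _) (re_le_Cmod c)). Qed.

Lemma Cmod_triangle_inv (u v : C) : Cmod u - Cmod v <= Cmod (u + v).
Proof.
  pose proof (Cmod_triangle (u + v) (- v)) as Ht.
  replace (u + v + - v)%C with u in Ht by ring. rewrite Cmod_opp in Ht. lra.
Qed.

Lemma fst_gt_of_Cmod_lt (z : C) (r : R) : Cmod z < r -> - r < fst z.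
Proof.
  intros Hz. pose proof (re_le_Cmod z) as Hre. pose proof (Rle_abs (- Re z)) as Hn.
  rewrite Rabs_Ropp in Hn. unfold Re in *. lra.
Qed.

Lemma Rabs_lt_Cmod (a b : R) : b <> 0 -> Rabs a < Cmod (a, b).
Proof.
  intros Hb. pose proof (Rsqr_pos_lt b Hb). unfold Cmod; cbn [fst snd].
  rewrite <- sqrt_Rsqr_abs. apply sqrt_lt_1_alt. unfold Rsqr in *. nra.
Qed.

Lemma is_derive_C_of_quadratic_remainder (f : C -> C) (z l : C) (K r : R) :
  0 < r ->
  (forall y, Cmod (y - z) < r ->
     Cmod (f y - f z - (y - z) * l) <= K * Cmod (y - z) ^ 2) ->
  is_derive_C f z l.
Proof.
  intros Hr Hf. split; [apply is_linear_scal_l |].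
  intros z' Hz'.
  apply (@is_filter_lim_locally_unique C_AbsRing (AbsRing_NormedModule C_AbsRing)) in Hz'.
  subst z'. intros eps.
  assert (HK : 0 < Rabs K + 1) by (pose proof (Rabs_pos K); lra).
  assert (Heps : 0 < eps / (Rabs K + 1)) by (apply Rdiv_lt_0_compat; [apply cond_pos | lra]).
  exists (mkposreal _ (Rmin_pos _ _ Hr Heps)). intros y Hy.
  change (Cmod (y - z) < Rmin r (eps / (Rabs K + 1))) in Hy.
  change (Cmod (f y - f z - (y - z) * l) <= eps * Cmod (y - z)).
  pose proof (Rmin_l r (eps / (Rabs K + 1))). pose proof (Rmin_r r (eps / (Rabs K + 1))).
  assert (Hd : 0 <= Cmod (y - z)) by apply Cmod_ge_0.
  assert (HKd : (Rabs K + 1) * Cmod (y - z) <= eps).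
  { replace (pos eps) with ((Rabs K + 1) * (eps / (Rabs K + 1))) by (field; lra).
    apply Rmult_le_compat_l; lra. }
  eapply Rle_trans; [apply Hf; lra |].
  pose proof (Rle_abs K). nra.
Qed.

(* The two normed-module structures on [C] have the same norm [Cmod] but
   different [norm_factor]s, so the two derivatives are not convertible. *)
Lemma is_derive_C_iff (f : C -> C) (z l : C) :
  @is_derive C_AbsRing (AbsRing_NormedModule C_AbsRing) f z l <-> is_derive_C f z l.
Proof.
  split; intros [_ Hf]; (split; [apply is_linear_scal_l |]);
    intros x Hx eps; exact (Hf x Hx eps).
Qed.

Lemma ex_derive_C_id (z : C) : ex_derive_C (fun x => x) z.
Proof.
  destruct (ex_derive_id (K := C_AbsRing) z) as [l Hl]. exists l. now apply is_derive_C_iff.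
Qed.

Lemma ex_derive_C_const (c z : C) : ex_derive_C (fun _ => c) z.
Proof. exact (ex_derive_const (V := C_NormedModule) c z). Qed.

Lemma ex_derive_C_plus (f g : C -> C) (z : C) :
  ex_derive_C f z -> ex_derive_C g z -> ex_derive_C (fun x => (f x + g x)%C) z.
Proof. exact (ex_derive_plus f g z). Qed.

Lemma ex_derive_C_opp (f : C -> C) (z : C) :
  ex_derive_C f z -> ex_derive_C (fun x => (- f x)%C) z.
Proof. exact (ex_derive_opp f z). Qed.

Lemma ex_derive_C_mult (f g : C -> C) (z : C) :
  ex_derive_C f z -> ex_derive_C g z -> ex_derive_C (fun x => (f x * g x)%C) z.
Proof.
  intros [lf Hf] [lg Hg]. eexists. apply is_derive_C_iff.
  apply (is_derive_mult (K := C_AbsRing) f g z lf lg);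
    [now apply is_derive_C_iff | now apply is_derive_C_iff | exact Cmult_comm].
Qed.

Lemma ex_derive_C_comp (f g : C -> C) (z : C) :
  ex_derive_C f (g z) -> ex_derive_C g z -> ex_derive_C (fun x => f (g x)) z.
Proof.
  intros Hf [l Hg]. apply (ex_derive_comp f g z Hf). exists l. now apply is_derive_C_iff.
Qed.

Lemma is_derive_Cinv (w : C) : w <> 0%C -> is_derive_C Cinv w (- / (w * w))%C.
Proof.
  intros Hw. assert (Hm : 0 < Cmod w) by now apply Cmod_gt_0.
  apply (is_derive_C_of_quadratic_remainder _ _ _ (2 / Cmod w ^ 3) (Cmod w / 2)); [lra |].
  intros y Hy.
  assert (Hyw : Cmod w / 2 < Cmod y).
  { pose proof (Cmod_triangle_inv w (y - w)) as Ht.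
    replace (w + (y - w))%C with y in Ht by ring. lra. }
  assert (Hy0 : y <> 0%C) by (intros ->; rewrite Cmod_0 in Hyw; lra).
  replace (/ y - / w - (y - w) * - / (w * w))%C
    with ((y - w) * (y - w) * / (y * (w * w)))%C by (field; auto).
  rewrite Cmod_mult, Cmod_mult, Cmod_inv, !Cmod_mult.
  2: { apply Cmod_gt_0. rewrite !Cmod_mult. apply Rmult_lt_0_compat; nra. }
  assert (Hd : 0 <= Cmod (y - w)) by apply Cmod_ge_0.
  apply Rle_trans with (Cmod (y - w) * Cmod (y - w) * / (Cmod w / 2 * (Cmod w * Cmod w))).
  - apply Rmult_le_compat_l; [nra |]. apply Rinv_le_contravar.
    + apply Rmult_lt_0_compat; [lra | nra].
    + apply Rmult_le_compat_r; nra.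
  - right. field. lra.
Qed.

Definition slit_plane (w : C) : Prop := 0 < fst w \/ snd w <> 0.

Lemma Csqrt_mul_self (w : C) : (Csqrt w * Csqrt w)%C = w.
Proof.
  destruct w as [a b]. unfold Csqrt; cbn [fst snd].
  set (m := Cmod (a, b)).
  assert (Hm : m * m = a * a + b * b) by (unfold m, Cmod; cbn [fst snd]; rewrite sqrt_sqrt; nra).
  assert (Ha : Rabs a <= m) by exact (re_le_Cmod (a, b)).
  pose proof (Rle_abs a). pose proof (Rle_abs (- a)). rewrite Rabs_Ropp in *.
  assert (Hb : Rabs b * Rabs b = b * b) by (rewrite <- Rabs_mult; apply Rabs_right; nra).
  pose proof (sqrt_sqrt ((m + a) / 2) ltac:(lra)).
  pose proof (sqrt_sqrt ((m - a) / 2) ltac:(lra)).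
  assert (Hxy : sqrt ((m + a) / 2) * sqrt ((m - a) / 2) = Rabs b / 2).
  { rewrite <- sqrt_mult_alt by lra.
    rewrite <- (sqrt_Rsqr (Rabs b / 2)) by (pose proof (Rabs_pos b); lra).
    f_equal. unfold Rsqr. nra. }
  unfold Cmult; cbn [fst snd].
  destruct (Rle_dec 0 b);
    [rewrite Rabs_right in Hxy by lra | rewrite Rabs_left in Hxy by lra];
    f_equal; nra.
Qed.

Lemma Csqrt_re_ge0 (w : C) : 0 <= fst (Csqrt w).
Proof. apply sqrt_pos. Qed.

Lemma Csqrt_re_pos_iff (w : C) : 0 < fst (Csqrt w) <-> slit_plane w.
Proof.
  destruct w as [a b]. unfold Csqrt, slit_plane; cbn [fst snd].
  pose proof (re_le_Cmod (a, b)) as Ha. cbn [Re fst] in Ha.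
  pose proof (Rle_abs (- a)) as Hna. rewrite Rabs_Ropp in Hna.
  split.
  - intros H. destruct (Rlt_dec 0 a) as [Hpos | Hpos]; [now left | right].
    intros ->. change (a, 0) with (RtoC a) in H.
    rewrite Cmod_R, Rabs_left1, Rplus_opp_l, Rdiv_0_l, sqrt_0 in H by lra. lra.
  - intros [H | H]; apply sqrt_lt_R0.
    + pose proof (Cmod_ge_0 (a, b)). lra.
    + pose proof (Rabs_lt_Cmod a b H). lra.
Qed.

Lemma Csqrt_unique (v w : C) : (v * v)%C = w -> 0 < fst v -> Csqrt w = v.
Proof.
  intros Hw Hv.
  assert (Hsum : (Csqrt w + v)%C <> 0%C).
  { intros E. apply (f_equal fst) in E. change (fst (Csqrt w) + fst v = 0) in E.
    pose proof (Csqrt_re_ge0 w). lra. }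
  assert (E : (Csqrt w - v = (Csqrt w * Csqrt w - v * v) / (Csqrt w + v))%C)
    by (field; exact Hsum).
  rewrite Csqrt_mul_self, Hw in E.
  replace ((w - w) / (Csqrt w + v))%C with (RtoC 0) in E by (field; exact Hsum).
  replace (Csqrt w) with ((Csqrt w - v) + v)%C by ring. rewrite E. ring.
Qed.

Lemma Csqrt_RtoC (x : R) : 0 < x -> Csqrt (RtoC x) = RtoC (sqrt x).
Proof.
  intros Hx. apply Csqrt_unique.
  - rewrite <- RtoC_mult, sqrt_sqrt by lra. reflexivity.
  - apply sqrt_lt_R0, Hx.
Qed.

Lemma Csqrt_im_mul_nonneg (a b : C) :
  (0 <= snd a <-> 0 <= snd b) -> 0 <= snd (Csqrt a) * snd (Csqrt b).
Proof.
  intros H. unfold Csqrt; cbn [snd].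
  pose proof (sqrt_pos ((Cmod a - fst a) / 2)). pose proof (sqrt_pos ((Cmod b - fst b) / 2)).
  destruct (Rle_dec 0 (snd a)), (Rle_dec 0 (snd b)); try tauto; nra.
Qed.

Lemma Cmod_sub_le_add (u v : C) :
  0 <= fst u -> 0 <= fst v -> 0 <= snd u * snd v -> Cmod (u - v) <= Cmod (u + v).
Proof.
  destruct u as [a b], v as [c d]. unfold Cmod, Cminus, Cplus, Copp; cbn [fst snd].
  intros. apply sqrt_le_1_alt. nra.
Qed.

Lemma Cmod_Csqrt_sub_le (u v : C) :
  Cmod (Csqrt u - Csqrt v) * fst (Csqrt v) <= Cmod (u - v).
Proof.
  replace (u - v)%C with ((Csqrt u - Csqrt v) * (Csqrt u + Csqrt v))%C
    by (transitivity (Csqrt u * Csqrt u - Csqrt v * Csqrt v)%C;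
        [ring | now rewrite !Csqrt_mul_self]).
  rewrite Cmod_mult. apply Rmult_le_compat_l; [apply Cmod_ge_0 |].
  eapply Rle_trans; [| apply fst_le_Cmod].
  change (fst (Csqrt v) <= fst (Csqrt u) + fst (Csqrt v)). pose proof (Csqrt_re_ge0 u). lra.
Qed.

Lemma is_derive_Csqrt (w : C) :
  slit_plane w -> is_derive_C Csqrt w (/ (2 * Csqrt w))%C.
Proof.
  intros Hw. apply Csqrt_re_pos_iff in Hw. set (rho := fst (Csqrt w)) in Hw.
  apply (is_derive_C_of_quadratic_remainder _ _ _ (/ (2 * rho ^ 3)) 1); [lra |].
  intros y _.
  pose proof (Cmod_Csqrt_sub_le y w) as Hl. fold rho in Hl.
  assert (HS : rho <= Cmod (Csqrt w)) by apply fst_le_Cmod.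
  assert (HS0 : Csqrt w <> 0%C) by (apply Cmod_gt_0; lra).
  set (T := Csqrt y) in *. set (S := Csqrt w) in *.
  assert (Hy : y = (T * T)%C) by (symmetry; apply Csqrt_mul_self).
  assert (Hw' : w = (S * S)%C) by (symmetry; apply Csqrt_mul_self).
  replace (T - S - (y - w) * / (2 * S))%C
    with (- ((T - S) * (T - S)) * / (2 * S))%C by (rewrite Hy, Hw'; field; exact HS0).
  rewrite Cmod_mult, Cmod_opp, Cmod_mult, Cmod_inv, Cmod_mult, Cmod_R, Rabs_right by
    (try apply Cmod_gt_0; try rewrite Cmod_mult, Cmod_R, Rabs_right; lra).
  set (e := Cmod (T - S)) in *. set (d := Cmod (y - w)) in *.
  assert (He : 0 <= e) by apply Cmod_ge_0.
  assert (Hed : e <= d / rho) by (apply Rmult_le_reg_r with rho; [lra |]; unfold Rdiv;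
    rewrite Rmult_assoc, Rinv_l, Rmult_1_r; lra).
  apply Rle_trans with ((d / rho) * (d / rho) * / (2 * rho)).
  - apply Rmult_le_compat.
    + nra.
    + apply Rlt_le, Rinv_0_lt_compat. lra.
    + apply Rmult_le_compat; lra.
    + apply Rinv_le_contravar; lra.
  - right. field. lra.
Qed.

Lemma ex_derive_C_Csqrt (g : C -> C) (z : C) :
  slit_plane (g z) -> ex_derive_C g z -> ex_derive_C (fun x => Csqrt (g x)) z.
Proof.
  intros Hg H. apply ex_derive_C_comp; [| exact H].
  eexists. now apply is_derive_Csqrt.
Qed.

Lemma ex_derive_C_Cinv (g : C -> C) (z : C) :
  g z <> 0%C -> ex_derive_C g z -> ex_derive_C (fun x => / g x)%C z.
Proof.
  intros Hg H. apply ex_derive_C_comp; [| exact H].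
  eexists. now apply is_derive_Cinv.
Qed.

#[local] Hint Resolve ex_derive_C_id ex_derive_C_const ex_derive_C_plus ex_derive_C_opp
  ex_derive_C_mult ex_derive_C_Csqrt ex_derive_C_Cinv : ex_derive_C.

Lemma slit_plane_of_disc_relation (p z : C) :
  ((1 - p) * (1 - p) = 4 * z * (3 + p))%C -> -4 < fst z ->
  ~ (snd z = 0 /\ 1 / 12 <= fst z) -> slit_plane p.
Proof.
  intros Hrel Hz Hcut. destruct p as [P Q], z as [a b]. cbn [fst snd] in Hz, Hcut.
  unfold slit_plane; cbn [fst snd].
  destruct (Rlt_dec 0 P) as [HP | HP]; [now left | right]. intros ->.
  pose proof (f_equal fst Hrel) as Hre. pose proof (f_equal snd Hrel) as Him.
  unfold Cmult, Cminus, Cplus, Copp, RtoC in Hre, Him. cbn [fst snd] in Hre, Him.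
  ring_simplify in Hre. ring_simplify in Him.
  assert (H3 : 3 + P <> 0) by (intros E; replace P with (-3) in Hre by lra; lra).
  assert (Hb : b = 0).
  { assert (E : b * (3 + P) = 0) by lra.
    destruct (Rmult_integral _ _ E); [assumption | contradiction]. }
  apply Hcut. split; [exact Hb |]. subst b.
  destruct (Rlt_dec 0 (3 + P)); [nra |].
  (* otherwise [(P + 7)^2 = 4 (a + 4) (3 + P) < 0] *)
  exfalso. assert ((a + 4) * (3 + P) < 0) by (apply Rmult_pos_neg; lra).
  pose proof (pow2_ge_0 (P + 7)). nra.
Qed.

Lemma disc_relation_one_sub_twelve (p z : C) :
  ((1 - p) * (1 - p) = 4 * z * (3 + p))%C ->
  ((1 - 12 * z) * (3 + p) = p * (7 - 3 * p))%C.
Proof.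
  intros Hrel. transitivity ((3 + p) - 3 * (4 * z * (3 + p)))%C; [ring |].
  rewrite <- Hrel. ring.
Qed.

Lemma Cmod_le_of_disc_relation (p z : C) :
  ((1 - p) * (1 - p) = 4 * z * (3 + p))%C -> Cmod p < 3 / 100 ->
  Cmod p <= Cmod (1 - 12 * z).
Proof.
  intros Hrel Hp.
  pose proof (f_equal Cmod (disc_relation_one_sub_twelve p z Hrel)) as E.
  rewrite !Cmod_mult in E.
  assert (H3 : Cmod (3 + p) <= 3 + Cmod p).
  { eapply Rle_trans; [apply Cmod_triangle |]. rewrite Cmod_R, Rabs_right; lra. }
  assert (H7 : 7 - 3 * Cmod p <= Cmod (7 - 3 * p)).
  { pose proof (Cmod_triangle_inv 7 (- (3 * p))) as Ht.
    rewrite Cmod_opp, Cmod_mult, !Cmod_R, !Rabs_right in Ht by lra. exact Ht. }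
  pose proof (Cmod_ge_0 p). pose proof (Cmod_ge_0 (1 - 12 * z)). pose proof (Cmod_ge_0 (3 + p)).
  nra.
Qed.

Lemma disc_relation_im_sign (p z : C) :
  ((1 - p) * (1 - p) = 4 * z * (3 + p))%C -> Cmod p < 1 -> 0 <= fst z ->
  (0 <= snd p <-> 0 <= snd (1 - 12 * z)%C).
Proof.
  intros Hrel Hp Hz. pose proof (re_le_Cmod p) as HP. pose proof (f_equal snd Hrel) as Him.
  destruct p as [P Q], z as [a b]. cbn [Re fst snd] in *.
  unfold Cmult, Cminus, Cplus, Copp, RtoC in Him |- *. cbn [fst snd] in Him |- *.
  pose proof (Rle_abs P) as HP1. pose proof (Rle_abs (- P)) as HP2. rewrite Rabs_Ropp in HP2.
  (* [Him] says [4 b (3 + P) = - Q (2 (1 - P) + 4 a)], with both factors positive *)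
  assert (HX : 0 < 3 + P) by lra. assert (HY : 0 < 2 * (1 - P) + 4 * a) by lra.
  split; intros Hsign.
  - destruct (Rle_dec b 0); [nra |]. exfalso. nra.
  - destruct (Rle_dec 0 Q); [assumption |]. exfalso. nra.
Qed.

Lemma Cmod_Csqrt_sub_le_of_disc_relation (p z : C) :
  ((1 - p) * (1 - p) = 4 * z * (3 + p))%C -> Cmod p < 3 / 100 -> 0 <= fst z ->
  Cmod (2 * Csqrt p - sqrt (12 / 7) * Csqrt (1 - 12 * z)) <= 2 * Cmod p.
Proof.
  intros Hrel Hp Hz.
  set (w := (1 - 12 * z)%C). set (q := Csqrt p). set (t := Csqrt w).
  set (beta := sqrt (12 / 7)).
  assert (Hbeta : 0 <= beta) by apply sqrt_pos.
  set (X := (2 * q - beta * t)%C). set (Y := (2 * q + beta * t)%C).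
  (* [q] and [t] lie in the same closed quadrant, so [|X| <= |Y|] *)
  assert (HXY : Cmod X <= Cmod Y).
  { apply Cmod_sub_le_add; cbn [fst snd Cmult RtoC].
    - pose proof (Csqrt_re_ge0 p) as Hq. fold q in Hq. lra.
    - pose proof (Csqrt_re_ge0 w) as Ht. fold t in Ht. nra.
    - pose proof (Csqrt_im_mul_nonneg p w
        (disc_relation_im_sign p z Hrel ltac:(lra) Hz)) as Him. fold q t in Him. nra. }
  assert (E : (7 * (3 + p) * (X * Y) = 64 * (p * p))%C).
  { assert (Hb : (7 * (beta * beta))%C = RtoC 12).
    { rewrite <- !RtoC_mult. unfold beta. rewrite sqrt_sqrt by lra. f_equal. field. }
    transitivity (28 * (q * q) * (3 + p) - (7 * (beta * beta)) * ((t * t) * (3 + p)))%C;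
      [unfold X, Y; ring |].
    rewrite Hb. unfold q, t. rewrite !Csqrt_mul_self. unfold w.
    rewrite (disc_relation_one_sub_twelve p z Hrel). ring. }
  apply (f_equal Cmod) in E. rewrite !Cmod_mult, !Cmod_R, !Rabs_right in E by lra.
  assert (H3 : 3 - Cmod p <= Cmod (3 + p)).
  { pose proof (Cmod_triangle_inv 3 p) as Ht. rewrite Cmod_R, Rabs_right in Ht by lra.
    exact Ht. }
  assert (HX0 : 0 <= Cmod X) by apply Cmod_ge_0.
  assert (HXX : Cmod X * Cmod X <= 4 * (Cmod p * Cmod p)).
  { assert (0 <= Cmod X * Cmod Y) by (apply Rmult_le_pos; [lra | apply Cmod_ge_0]).
    nra. }
  pose proof (Cmod_ge_0 p). nra.
Qed.

Lemma two_div_one_add_Csqrt_expansion (p z : C) :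
  ((1 - p) * (1 - p) = 4 * z * (3 + p))%C -> Cmod p < 3 / 100 -> 0 <= fst z ->
  Cmod (2 / (1 + Csqrt p) - (2 - sqrt (12 / 7) * Csqrt (1 - 12 * z)))
    <= 4 * Cmod (1 - 12 * z).
Proof.
  intros Hrel Hp Hz.
  pose proof (Cmod_Csqrt_sub_le_of_disc_relation p z Hrel Hp Hz) as HX.
  pose proof (Cmod_le_of_disc_relation p z Hrel Hp) as Hpw.
  set (q := Csqrt p) in *. set (X := (2 * q - sqrt (12 / 7) * Csqrt (1 - 12 * z))%C) in *.
  assert (Hq : 1 <= Cmod (1 + q)).
  { eapply Rle_trans; [| apply fst_le_Cmod].
    change (1 <= 1 + fst q). pose proof (Csqrt_re_ge0 p) as Hq. fold q in Hq. lra. }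
  assert (Hq0 : (1 + q)%C <> 0%C) by (apply Cmod_gt_0; lra).
  replace (2 / (1 + q) - (2 - sqrt (12 / 7) * Csqrt (1 - 12 * z)))%C
    with (2 * p / (1 + q) + - X)%C
    by (unfold X, q; rewrite <- (Csqrt_mul_self p) at 1; field; exact Hq0).
  eapply Rle_trans; [apply Cmod_triangle |].
  unfold Cdiv. rewrite Cmod_opp, !Cmod_mult, Cmod_inv, Cmod_R, Rabs_right by (auto; lra).
  pose proof (Rinv_le_contravar 1 _ Rlt_0_1 Hq) as Hinv. rewrite Rinv_1 in Hinv.
  pose proof (Cmod_ge_0 p). pose proof (Rinv_0_lt_compat (Cmod (1 + q)) ltac:(lra)).
  nra.
Qed.

Lemma Kr_two_div_one_add (x q : R) : 1 + q <> 0 ->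
  Kr x (2 / (1 + q)) =
  (2 / (1 + q)) ^ 4 * (((1 - q ^ 2) / 4) ^ 2 + x * ((1 - q ^ 2) / 4) - x).
Proof. intros Hq. unfold Kr. field. exact Hq. Qed.

Lemma Kr_root (x k P : R) : 0 < x -> k * k = 4 ->
  P = 1 + 2 * x + k * (sqrt x * sqrt (x + 4)) -> 0 <= P ->
  Kr x (2 / (1 + sqrt P)) = 0.
Proof.
  intros Hx Hk HP HP0.
  assert (HG : (sqrt x * sqrt (x + 4)) ^ 2 = x * (x + 4)).
  { rewrite Rpow_mult_distr, !pow2_sqrt; lra. }
  assert (Hquad : ((1 - P) / 4) ^ 2 + x * ((1 - P) / 4) - x = 0).
  { subst P. transitivity (k * k * (sqrt x * sqrt (x + 4)) ^ 2 / 16 - x * (x + 4) / 4);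
      [field | rewrite Hk, HG; field]. }
  rewrite Kr_two_div_one_add, pow2_sqrt, Hquad by (pose proof (sqrt_pos P); lra).
  ring.
Qed.

Lemma sqrt_mul_sqrt_add4_bounds (x : R) : 0 < x < 1 / 12 ->
  x < sqrt x * sqrt (x + 4) < x + 1 / 2.
Proof.
  intros Hx. rewrite <- sqrt_mult_alt by lra.
  split; [rewrite <- (sqrt_pow2 x) at 1 by lra | rewrite <- (sqrt_pow2 (x + 1 / 2)) by lra];
    apply sqrt_lt_1_alt; nra.
Qed.

Lemma sqrt_one_twelfth_bounds : 0.28 < sqrt (1 / 12) < 0.29.
Proof.
  split; [rewrite <- (sqrt_pow2 0.28) | rewrite <- (sqrt_pow2 0.29)];
    try apply sqrt_lt_1_alt; lra.
Qed.

Lemma sqrt_one_twelfth_add4_bounds : 2 < sqrt (1 / 12 + 4) < 2.03.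
Proof.
  split; [rewrite <- (sqrt_pow2 2) | rewrite <- (sqrt_pow2 2.03)];
    try apply sqrt_lt_1_alt; lra.
Qed.

Lemma sqrt_one_twelfth_mul_sqrt_add4 : sqrt (1 / 12) * sqrt (1 / 12 + 4) = 7 / 12.
Proof.
  rewrite <- sqrt_mult_alt, <- (sqrt_pow2 (7 / 12)) by lra. f_equal. field.
Qed.

Lemma two_div_one_add_sqrt_one_twelfth :
  2 / (1 + sqrt (1 + 2 * (1 / 12) + 2 * (sqrt (1 / 12) * sqrt (1 / 12 + 4))))
  = (-3 + sqrt 21) / 2.
Proof.
  rewrite sqrt_one_twelfth_mul_sqrt_add4.
  replace (1 + 2 * (1 / 12) + 2 * (7 / 12)) with (21 / 3 ^ 2) by field.
  rewrite sqrt_div_alt, sqrt_pow2 by lra.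
  pose proof (sqrt_pos 21). pose proof (pow2_sqrt 21 ltac:(lra)).
  apply (Rmult_eq_reg_r (1 + sqrt 21 / 3)); [| lra].
  unfold Rdiv at 1. rewrite Rmult_assoc, Rinv_l, Rmult_1_r by lra.
  nra.
Qed.

Section BranchesOffRay.

Variable theta : R.

(* [half_turn = -i e^(i theta / 2)] and [ray_conj = e^(-i theta)], so that
   [half_turn^2 ray_conj = -1]; [- z ray_conj] crosses the cut of [Csqrt]
   exactly when [z] crosses the ray of angle [theta]. *)
Definition ray_conj : C := (cos theta, - sin theta).
Definition half_turn : C := (sin (theta / 2), - cos (theta / 2)).

Definition sqrt_off_ray (z : C) : C := (half_turn * Csqrt (- (z * ray_conj)))%C.

Definition sqrt_z_z4 (z : C) : C := (sqrt_off_ray z * Csqrt (z + 4))%C.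

Definition disc (k z : C) : C := (1 + 2 * z + k * sqrt_z_z4 z)%C.

(* [u_branch (-2)] and [u_branch 2] continue [u1] and [u2]. *)
Definition u_branch (k z : C) : C := (2 / (1 + Csqrt (disc k z)))%C.

Lemma sin_half_sq_add_cos_half_sq : sin (theta / 2) ^ 2 + cos (theta / 2) ^ 2 = 1.
Proof. pose proof (sin2_cos2 (theta / 2)) as H. unfold Rsqr in H. lra. Qed.

Lemma cos_half_angle : cos theta = cos (theta / 2) ^ 2 - sin (theta / 2) ^ 2.
Proof. replace theta with (2 * (theta / 2)) at 1 by field. rewrite cos_2a. ring. Qed.

Lemma sin_half_angle : sin theta = 2 * sin (theta / 2) * cos (theta / 2).
Proof. replace theta with (2 * (theta / 2)) at 1 by field. rewrite sin_2a. ring. Qed.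

Lemma Cmod_ray_conj : Cmod ray_conj = 1.
Proof.
  unfold Cmod, ray_conj; cbn [fst snd]. rewrite <- sqrt_1. f_equal.
  pose proof (sin2_cos2 theta) as H. unfold Rsqr in H. nra.
Qed.

Lemma Cmod_half_turn : Cmod half_turn = 1.
Proof.
  unfold Cmod, half_turn; cbn [fst snd]. rewrite <- sqrt_1. f_equal.
  pose proof sin_half_sq_add_cos_half_sq. nra.
Qed.

Lemma sqrt_off_ray_mul_self (z : C) : (sqrt_off_ray z * sqrt_off_ray z)%C = z.
Proof.
  assert (Hturn : (half_turn * half_turn * ray_conj = - 1)%C).
  { unfold half_turn, ray_conj, Cmult, Copp, RtoC; cbn [fst snd].
    rewrite cos_half_angle, sin_half_angle. pose proof sin_half_sq_add_cos_half_sq.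
    f_equal; nra. }
  unfold sqrt_off_ray.
  transitivity (half_turn * half_turn * (Csqrt (- (z * ray_conj)) * Csqrt (- (z * ray_conj))))%C;
    [ring |].
  rewrite Csqrt_mul_self.
  transitivity (- (half_turn * half_turn * ray_conj) * z)%C; [ring |].
  rewrite Hturn. ring.
Qed.

Lemma slit_plane_off_ray (z : C) :
  ~ (exists r : R, 0 <= r /\ z = (r * cos theta, r * sin theta)) ->
  slit_plane (- (z * ray_conj))%C.
Proof.
  intros Hz. destruct z as [a b].
  unfold slit_plane, ray_conj, Cmult, Copp; cbn [fst snd].
  destruct (Rlt_dec 0 (- (a * cos theta - b * - sin theta))) as [H | H]; [now left | right].
  intros Him. apply Hz. exists (a * cos theta + b * sin theta). split; [lra |].
  pose proof (sin2_cos2 theta) as Hsc. unfold Rsqr in Hsc.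
  assert (Hbc : b * cos theta = a * sin theta) by lra.
  f_equal.
  - transitivity (a * (sin theta * sin theta + cos theta * cos theta)); [rewrite Hsc; ring |].
    transitivity (a * cos theta * cos theta + (a * sin theta) * sin theta); [ring |].
    rewrite <- Hbc. ring.
  - transitivity (b * (sin theta * sin theta + cos theta * cos theta)); [rewrite Hsc; ring |].
    transitivity (a * sin theta * cos theta + (b * sin theta) * sin theta);
      [rewrite <- Hbc; ring | ring].
Qed.

Lemma slit_plane_add4 (z : C) : Cmod z < 4 -> slit_plane (z + 4)%C.
Proof.
  intros Hz. left. change (0 < fst z + 4). apply fst_gt_of_Cmod_lt in Hz. lra.
Qed.

Lemma sqrt_z_z4_mul_self (z : C) : (sqrt_z_z4 z * sqrt_z_z4 z = z * (z + 4))%C.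
Proof.
  unfold sqrt_z_z4.
  transitivity (sqrt_off_ray z * sqrt_off_ray z * (Csqrt (z + 4) * Csqrt (z + 4)))%C; [ring |].
  now rewrite sqrt_off_ray_mul_self, Csqrt_mul_self.
Qed.

Lemma disc_relation (k z : C) : (k * k = 4)%C ->
  ((1 - disc k z) * (1 - disc k z) = 4 * z * (3 + disc k z))%C.
Proof.
  intros Hk. unfold disc.
  transitivity (4 * z * z + 4 * k * z * sqrt_z_z4 z + (k * k) * (sqrt_z_z4 z * sqrt_z_z4 z))%C;
    [ring |].
  rewrite Hk, sqrt_z_z4_mul_self. ring.
Qed.

Lemma ex_derive_u_branch (k z : C) :
  slit_plane (- (z * ray_conj))%C -> slit_plane (z + 4)%C -> slit_plane (disc k z) ->
  ex_derive_C (u_branch k) z.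
Proof.
  intros Hray H4 Hdisc.
  assert (Hden : (1 + Csqrt (disc k z))%C <> 0%C).
  { intros E. apply (f_equal fst) in E. change (1 + fst (Csqrt (disc k z)) = 0) in E.
    pose proof (Csqrt_re_ge0 (disc k z)). lra. }
  unfold u_branch, Cdiv, disc, sqrt_z_z4, sqrt_off_ray in *.
  auto 20 with ex_derive_C.
Qed.

Lemma holomorphic_u_branch (k : C) : (k * k = 4)%C -> holomorphic_on (Dtheta theta) (u_branch k).
Proof.
  intros Hk z (Hz4 & Hray & Hcut). apply ex_derive_u_branch.
  - now apply slit_plane_off_ray.
  - now apply slit_plane_add4.
  - apply (slit_plane_of_disc_relation _ z (disc_relation k z Hk)); [| exact Hcut].
    now apply fst_gt_of_Cmod_lt.
Qed.

Hypothesis sin_half_pos : 0 < sin (theta / 2).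

Lemma Csqrt_neg_RtoC_ray_conj (x : R) : 0 < x ->
  Csqrt (- (RtoC x * ray_conj))%C = (sqrt x * sin (theta / 2), sqrt x * cos (theta / 2)).
Proof.
  intros Hx. apply Csqrt_unique.
  - unfold ray_conj, Cmult, Copp, RtoC; cbn [fst snd].
    rewrite cos_half_angle, sin_half_angle.
    assert (Hr : sqrt x * sqrt x = x) by (apply sqrt_sqrt; lra).
    set (r := sqrt x) in *. rewrite <- Hr. f_equal; ring.
  - cbn [fst]. apply Rmult_lt_0_compat; [apply sqrt_lt_R0 |]; lra.
Qed.

Lemma sqrt_off_ray_RtoC (x : R) : 0 < x -> sqrt_off_ray (RtoC x) = RtoC (sqrt x).
Proof.
  intros Hx. unfold sqrt_off_ray. rewrite Csqrt_neg_RtoC_ray_conj by exact Hx.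
  unfold half_turn, Cmult, RtoC; cbn [fst snd].
  f_equal; [| ring].
  transitivity (sqrt x * (sin (theta / 2) ^ 2 + cos (theta / 2) ^ 2)); [ring |].
  rewrite sin_half_sq_add_cos_half_sq. ring.
Qed.

Lemma disc_RtoC (k x : R) : 0 < x ->
  disc (RtoC k) (RtoC x) = RtoC (1 + 2 * x + k * (sqrt x * sqrt (x + 4))).
Proof.
  intros Hx. unfold disc, sqrt_z_z4.
  rewrite sqrt_off_ray_RtoC, <- RtoC_plus, Csqrt_RtoC by lra.
  rewrite !RtoC_plus, !RtoC_mult. reflexivity.
Qed.

Lemma u_branch_RtoC (k x : R) : 0 < x -> 0 < 1 + 2 * x + k * (sqrt x * sqrt (x + 4)) ->
  u_branch (RtoC k) (RtoC x) = RtoC (2 / (1 + sqrt (1 + 2 * x + k * (sqrt x * sqrt (x + 4))))).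
Proof.
  intros Hx HP. unfold u_branch. rewrite disc_RtoC, Csqrt_RtoC by lra.
  pose proof (sqrt_pos (1 + 2 * x + k * (sqrt x * sqrt (x + 4)))).
  rewrite <- RtoC_plus, <- RtoC_div by lra. reflexivity.
Qed.

Lemma u_branch_neg_two_real_root (x : R) : 0 < x < 1 / 12 ->
  exists y : R, 1 < y < 2 /\ Kr x y = 0 /\ u_branch (-2) (RtoC x) = RtoC y.
Proof.
  intros Hx. pose proof (sqrt_mul_sqrt_add4_bounds x Hx).
  set (P := 1 + 2 * x + -2 * (sqrt x * sqrt (x + 4))).
  assert (HP : 0 < P < 1) by (unfold P; lra).
  assert (HsP : 0 < sqrt P < 1).
  { split; [apply sqrt_lt_R0; lra |]. rewrite <- sqrt_1. apply sqrt_lt_1_alt. lra. }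
  exists (2 / (1 + sqrt P)). repeat split.
  - apply (Rmult_lt_reg_r (1 + sqrt P)); [lra |]. field_simplify; lra.
  - apply (Rmult_lt_reg_r (1 + sqrt P)); [lra |]. field_simplify; lra.
  - apply (Kr_root x (-2)); [lra | lra | reflexivity | lra].
  - apply u_branch_RtoC; lra.
Qed.

Lemma u_branch_two_real_root (x : R) : 0 < x < 1 / 12 ->
  exists y : R, 0 < y < 1 /\ Kr x y = 0 /\ u_branch 2 (RtoC x) = RtoC y.
Proof.
  intros Hx. pose proof (sqrt_mul_sqrt_add4_bounds x Hx).
  set (P := 1 + 2 * x + 2 * (sqrt x * sqrt (x + 4))).
  assert (HsP : 1 < sqrt P) by (rewrite <- sqrt_1; apply sqrt_lt_1_alt; unfold P; lra).
  exists (2 / (1 + sqrt P)). repeat split.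
  - apply Rdiv_lt_0_compat; lra.
  - apply (Rmult_lt_reg_r (1 + sqrt P)); [lra |]. field_simplify; lra.
  - apply (Kr_root x 2); [lra | lra | reflexivity | unfold P; lra].
  - apply u_branch_RtoC; unfold P; lra.
Qed.

Lemma u_branch_two_one_twelfth : u_branch 2 (RtoC (1 / 12)) = RtoC ((-3 + sqrt 21) / 2).
Proof.
  rewrite u_branch_RtoC, two_div_one_add_sqrt_one_twelfth by
    (try pose proof (sqrt_pos (1 / 12)); try pose proof (sqrt_pos (1 / 12 + 4)); nra).
  reflexivity.
Qed.

Definition radius_one_twelfth : R := sin (theta / 2) ^ 2 / 1000.

Lemma radius_one_twelfth_le : radius_one_twelfth <= 1 / 1000.
Proof.
  unfold radius_one_twelfth. pose proof sin_half_sq_add_cos_half_sq.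
  pose proof (pow2_ge_0 (cos (theta / 2))). lra.
Qed.

Lemma fst_near_one_twelfth (z : C) :
  Cmod (z - RtoC (1 / 12)) < radius_one_twelfth -> 1 / 12 - 1 / 1000 < fst z.
Proof.
  intros Hz. pose proof radius_one_twelfth_le.
  assert (Hfst : - (1 / 1000) < fst (z - RtoC (1 / 12))%C) by (apply fst_gt_of_Cmod_lt; lra).
  change (fst (z - RtoC (1 / 12))%C) with (fst z - 1 / 12) in Hfst. lra.
Qed.

Lemma Csqrt_neg_ray_conj_near (z : C) : Cmod (z - RtoC (1 / 12)) < radius_one_twelfth ->
  Cmod (Csqrt (- (z * ray_conj)) -
        (sqrt (1 / 12) * sin (theta / 2), sqrt (1 / 12) * cos (theta / 2)))
    < sin (theta / 2) / 280.
Proof.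
  intros Hz. pose proof sqrt_one_twelfth_bounds as Ha.
  pose proof (Cmod_Csqrt_sub_le (- (z * ray_conj)) (- (RtoC (1 / 12) * ray_conj))) as H.
  replace (- (z * ray_conj) - - (RtoC (1 / 12) * ray_conj))%C
    with (- ((z - RtoC (1 / 12)) * ray_conj))%C in H by ring.
  rewrite Cmod_opp, Cmod_mult, Cmod_ray_conj, Csqrt_neg_RtoC_ray_conj in H by lra.
  cbn [fst] in H. unfold radius_one_twelfth in Hz.
  set (e := Cmod (_ - _)) in H |- *.
  destruct (Rlt_dec e (sin (theta / 2) / 280)) as [He | He]; [exact He | exfalso].
  assert (sin (theta / 2) / 280 * (0.28 * sin (theta / 2))
          <= e * (sqrt (1 / 12) * sin (theta / 2))) by (apply Rmult_le_compat; nra).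
  lra.
Qed.

Lemma slit_plane_neg_ray_conj_near (z : C) :
  Cmod (z - RtoC (1 / 12)) < radius_one_twelfth -> slit_plane (- (z * ray_conj))%C.
Proof.
  intros Hz. apply Csqrt_re_pos_iff.
  pose proof (Csqrt_neg_ray_conj_near z Hz) as H. pose proof sqrt_one_twelfth_bounds.
  set (v0 := (sqrt (1 / 12) * sin (theta / 2), sqrt (1 / 12) * cos (theta / 2))) in H.
  pose proof (fst_le_Cmod (- (Csqrt (- (z * ray_conj)) - v0))) as Hre.
  rewrite Cmod_opp in Hre.
  change (- (fst (Csqrt (- (z * ray_conj))) - fst v0) <= Cmod (Csqrt (- (z * ray_conj)) - v0))
    in Hre.
  change (fst v0) with (sqrt (1 / 12) * sin (theta / 2)) in Hre.
  assert (0.28 * sin (theta / 2) < sqrt (1 / 12) * sin (theta / 2))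
    by (apply Rmult_lt_compat_r; lra).
  lra.
Qed.

Lemma sqrt_off_ray_near (z : C) : Cmod (z - RtoC (1 / 12)) < radius_one_twelfth ->
  Cmod (sqrt_off_ray z - RtoC (sqrt (1 / 12))) < 1 / 280.
Proof.
  intros Hz. rewrite <- sqrt_off_ray_RtoC by lra. unfold sqrt_off_ray.
  set (S0 := Csqrt (- (RtoC (1 / 12) * ray_conj))).
  replace (half_turn * Csqrt (- (z * ray_conj)) - half_turn * S0)%C
    with (half_turn * (Csqrt (- (z * ray_conj)) - S0))%C by ring.
  rewrite Cmod_mult, Cmod_half_turn, Rmult_1_l. unfold S0.
  rewrite Csqrt_neg_RtoC_ray_conj by lra.
  pose proof (Csqrt_neg_ray_conj_near z Hz). pose proof (SIN_bound (theta / 2)). lra.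
Qed.

Lemma sqrt_z_z4_near (z : C) : Cmod (z - RtoC (1 / 12)) < radius_one_twelfth ->
  Cmod (sqrt_z_z4 z - RtoC (7 / 12)) < 1 / 100.
Proof.
  intros Hz. pose proof radius_one_twelfth_le as Hr.
  pose proof sqrt_one_twelfth_bounds as Ha0. pose proof sqrt_one_twelfth_add4_bounds as Hb0.
  pose proof (sqrt_off_ray_near z Hz) as Ha.
  set (a0 := sqrt (1 / 12)) in *. set (b0 := sqrt (1 / 12 + 4)) in *.
  assert (Hb : Cmod (Csqrt (z + 4) - RtoC b0) * b0 <= Cmod (z - RtoC (1 / 12))).
  { pose proof (Cmod_Csqrt_sub_le (z + 4) (RtoC (1 / 12 + 4))) as Hl.
    rewrite Csqrt_RtoC in Hl by lra. rewrite RtoC_plus in Hl.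
    replace (z + 4 - (RtoC (1 / 12) + 4))%C with (z - RtoC (1 / 12))%C in Hl by ring.
    exact Hl. }
  set (ea := Cmod (sqrt_off_ray z - RtoC a0)) in *.
  set (eb := Cmod (Csqrt (z + 4) - RtoC b0)) in *.
  assert (Hea : 0 <= ea) by apply Cmod_ge_0. assert (Heb : 0 <= eb) by apply Cmod_ge_0.
  assert (Hr4 : Cmod (Csqrt (z + 4)) <= b0 + eb).
  { pose proof (Cmod_triangle (Csqrt (z + 4) - RtoC b0) (RtoC b0)) as Ht.
    replace (Csqrt (z + 4) - RtoC b0 + RtoC b0)%C with (Csqrt (z + 4)) in Ht by ring.
    rewrite Cmod_R, Rabs_right in Ht by lra. fold eb in Ht. lra. }
  replace (sqrt_z_z4 z - RtoC (7 / 12))%C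
    with ((sqrt_off_ray z - RtoC a0) * Csqrt (z + 4) + RtoC a0 * (Csqrt (z + 4) - RtoC b0))%C
    by (unfold sqrt_z_z4; rewrite <- sqrt_one_twelfth_mul_sqrt_add4, RtoC_mult; fold a0 b0; ring).
  eapply Rle_lt_trans; [apply Cmod_triangle |].
  rewrite !Cmod_mult, Cmod_R, Rabs_right by lra. fold ea eb.
  pose proof (Cmod_ge_0 (Csqrt (z + 4))). nra.
Qed.

Lemma disc_expand_one_twelfth (k z : C) :
  (disc k z = 1 + 2 * (1 / 12)%R + k * (7 / 12)%R + 2 * (z - (1 / 12)%R)
              + k * (sqrt_z_z4 z - (7 / 12)%R))%C.
Proof. unfold disc. ring. Qed.

Lemma Cmod_disc_neg_two_near (z : C) :
  Cmod (z - RtoC (1 / 12)) < radius_one_twelfth -> Cmod (disc (-2) z) < 3 / 100.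
Proof.
  intros Hz. pose proof radius_one_twelfth_le. pose proof (sqrt_z_z4_near z Hz).
  rewrite disc_expand_one_twelfth.
  replace (1 + 2 * (1 / 12)%R + -2 * (7 / 12)%R)%C with (RtoC 0)
    by (rewrite <- !RtoC_mult, <- !RtoC_plus; f_equal; field).
  eapply Rle_lt_trans; [apply Cmod_triangle |].
  eapply Rle_lt_trans; [apply Rplus_le_compat_r, Cmod_triangle |].
  rewrite !Cmod_mult, Cmod_0, !Cmod_R, Rabs_right, Rabs_left by lra. lra.
Qed.

Lemma holomorphic_u_branch_two_near :
  holomorphic_on (fun z => Cmod (z - RtoC (1 / 12)) < radius_one_twelfth) (u_branch 2).
Proof.
  intros z Hz. pose proof radius_one_twelfth_le.
  apply ex_derive_u_branch.
  - now apply slit_plane_neg_ray_conj_near.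
  - apply slit_plane_add4.
    pose proof (Cmod_triangle (z - RtoC (1 / 12)) (RtoC (1 / 12))) as Ht.
    replace (z - RtoC (1 / 12) + RtoC (1 / 12))%C with z in Ht by ring.
    rewrite Cmod_R, Rabs_right in Ht; lra.
  - left. rewrite disc_expand_one_twelfth.
    pose proof (fst_near_one_twelfth z Hz) as Hre. pose proof (sqrt_z_z4_near z Hz) as Hg.
    pose proof (fst_le_Cmod (- (sqrt_z_z4 z - RtoC (7 / 12)))) as Hg'.
    rewrite Cmod_opp in Hg'.
    cbn [fst snd Cplus Cmult Cminus Copp RtoC] in Hg' |- *. lra.
Qed.

Lemma u_branch_neg_two_expansion (z : C) :
  Cmod (z - RtoC (1 / 12)) < radius_one_twelfth ->
  Cmod (u_branch (-2) z - (2 - sqrt (12 / 7) * Csqrt (1 - 12 * z)))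
    <= 4 * Cmod (1 - 12 * z).
Proof.
  intros Hz. apply two_div_one_add_Csqrt_expansion.
  - apply disc_relation. rewrite <- RtoC_mult. f_equal. ring.
  - now apply Cmod_disc_neg_two_near.
  - pose proof (fst_near_one_twelfth z Hz). lra.
Qed.

End BranchesOffRay.

Theorem lemma4p8 (theta : R) (Htheta : 0 < theta < 2 * PI) :
  exists U1 U2 : C -> C,
    (* analytic continuations on D(theta) of u1 and u2 *)
    holomorphic_on (Dtheta theta) U1 /\
    holomorphic_on (Dtheta theta) U2 /\
    (forall x : R, 0 < x < 1 / 12 ->
       exists y : R, 1 < y < 2 /\ Kr x y = 0 /\ U1 (RtoC x) = RtoC y) /\
    (forall x : R, 0 < x < 1 / 12 ->
       exists y : R, 0 < y < 1 /\ Kr x y = 0 /\ U2 (RtoC x) = RtoC y) /\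
    (* u2 is analytic at 1/12 with value (-3 + sqrt 21)/2 *)
    (exists (r : R) (V : C -> C),
       0 < r /\
       holomorphic_on (fun z => Cmod (Cminus z (RtoC (1 / 12))) < r) V /\
       (forall z, Dtheta theta z -> Cmod (Cminus z (RtoC (1 / 12))) < r ->
          V z = U2 z) /\
       V (RtoC (1 / 12)) = RtoC ((-3 + sqrt 21) / 2)) /\
    (* u1(z) = 2 - sqrt(12/7) sqrt(1 - 12 z) + O(1 - 12 z) as z -> 1/12 in D(theta) *)
    (exists (M delta : R),
       0 < delta /\
       forall z, Dtheta theta z -> Cmod (Cminus z (RtoC (1 / 12))) < delta ->
         Cmod (Cminus (U1 z)
                 (Cminus (RtoC 2)
                    (Cmult (RtoC (sqrt (12 / 7)))
                           (Csqrt (Cminus (RtoC 1) (Cmult (RtoC 12) z))))))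
         <= M * Cmod (Cminus (RtoC 1) (Cmult (RtoC 12) z))).
Proof.
  assert (Hsin : 0 < sin (theta / 2)) by (apply sin_gt_0; lra).
  assert (Hr : 0 < radius_one_twelfth theta)
    by (apply Rdiv_lt_0_compat; [apply pow_lt |]; lra).
  assert (Hk : forall k : R, k * k = 4 -> (RtoC k * RtoC k = 4)%C)
    by (intros k Hk; now rewrite <- RtoC_mult, Hk).
  exists (u_branch theta (-2)), (u_branch theta 2).
  split; [apply holomorphic_u_branch, Hk; lra |].
  split; [apply holomorphic_u_branch, Hk; lra |].
  split; [exact (u_branch_neg_two_real_root theta Hsin) |].
  split; [exact (u_branch_two_real_root theta Hsin) |].
  split.
  - exists (radius_one_twelfth theta), (u_branch theta 2).
    repeat split; [exact Hr | exact (holomorphic_u_branch_two_near theta Hsin) |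
                   exact (u_branch_two_one_twelfth theta Hsin)].
  - exists 4, (radius_one_twelfth theta). split; [exact Hr |].
    intros z _ Hz. exact (u_branch_neg_two_expansion theta Hsin z Hz).
Qed.
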